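(* Let $v\ge4$ be an integer with $v\not\equiv2\pmod 4$. Then an optimum $(d,2)$-CDA$((d+1)v^2;5,v)$ exists for every positive integer $d$ with $d+1\le v$.
   Context: Consecutive $t$-way interaction in an $N\times k$ array $A=(a_{ij})$ over a $v$-set $V$: $T=\{(i,x_i),\dots,(i+t-1,x_{i+t-1})\}$, $1\le i\le k-t+1$, $x_r\in V$; $\rho(A,T)=\{r: a_{r,j}=x_j\ \forall (j,x_j)\in T\}$, $\rho(A,\mathcal T)=\bigcup_{T\in\mathcal T}\rho(A,T)$. A $(d,t)$-CDA$(N;k,v)$ is an $N\times k$ array over $V$ in which every $t$ consecutive columns contain every $t$-tuple at least once, and such that for every set $\mathcal T$ of exactly $d$ distinct consecutive $t$-way interactions and every consecutive $t$-way interaction $T$: $\rho(A,T)\subseteq\rho(A,\mathcal T)$ iff $T\in\mathcal T$. It is optimum if $N=(d+1)v^t$. *)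

From mathcomp Require Import all_boot all_order all_algebra.
Set Implicit Arguments. Unset Strict Implicit. Unset Printing Implicit Defensive.

(* Columns are 0-indexed: 'I_k; symbols: V = 'I_v (a v-set).
   A t-way interaction is a set of (column, symbol) pairs. *)
Notation pairT k v := ('I_k * 'I_v)%type.

Definition cinter (k v t : nat) (T : {set pairT k v}) : Prop :=
  exists (i : nat) (x : 'I_k -> 'I_v),
    i + t <= k /\ T = [set p : pairT k v | (i <= p.1 < i + t) && (p.2 == x p.1)].

Definition rho (N k v : nat) (A : 'M['I_v]_(N, k)) (T : {set pairT k v})
  : {set 'I_N} := [set r : 'I_N | [forall p in T, A r p.1 == p.2]].

Definition rhoF (N k v : nat) (A : 'M['I_v]_(N, k)) (F : {set {set pairT k v}})
  : {set 'I_N} := \bigcup_(T in F) rho A T.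

Definition is_CDA (d t N k v : nat) (A : 'M['I_v]_(N, k)) : Prop :=
  (forall i : nat, i + t <= k -> forall x : 'I_t -> 'I_v,
     exists r : 'I_N, forall (j : 'I_t) (c : 'I_k), nat_of_ord c = i + j -> A r c = x j)
  /\
  (forall F : {set {set pairT k v}},
     (forall T, T \in F -> cinter t T) -> #|F| = d ->
     forall T, cinter t T -> (rho A T \subset rhoF A F <-> T \in F)).

Definition is_optimum_CDA (d t N k v : nat) (A : 'M['I_v]_(N, k)) : Prop :=
  is_CDA d t A /\ N = (d + 1) * v ^ t.

From mathcomp Require Import all_boot all_order all_algebra.
From mathcomp Require Import zify.
Import GRing.Theory.

Set Implicit Arguments.
Unset Strict Implicit.
Unset Printing Implicit Defensive.

(* If every consecutive t-way interaction T is met by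
   more than d rows (#|rho A T| > d) and two distinct such interactions share
   at most one row, then A is d-disjunct: when T is not in a family F of d
   interactions, the rows of T are spread over the d sets rho T :&: rho T'
   (T' in F), each of size at most 1, so they cannot all be covered.

   For t = 2 an interaction is a "window" {(c, a); (c+1, b)}.  It
   suffices to exhibit a family of rows, indexed by a finite type R, such that
   (W1) every window pattern (a, b) at every position occurs in > d rows, and
   (W2) the values at two different window positions determine the row.

   Over a Z-module V with an injective "shift" map sigma : S -> V,
   the row (s, a, b) is (a, b, a+s, b+s, a+2s), writing s for sigma s.  Any two
   windows determine (s, a, b), and each pattern at each window is realized by
   one row for every shift.  With V = Z_v and S = {0, ..., d} (d + 1 <= v) this
   gives (d+1)v^2 rows meeting (W1) and (W2). *)

Lemma card_bigcup_le (T I : finType) (P : pred I) (F : I -> {set T}) :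
  #|\bigcup_(i | P i) F i| <= \sum_(i | P i) #|F i|.
Proof.
elim/big_rec2: _ => [|i S m _ leSm]; first by rewrite cards0.
exact: leq_trans (leq_card_setU _ _) (leq_add _ leSm).
Qed.

Section CountingCriterion.
Variables (d t N k v : nat) (A : 'M['I_v]_(N, k)).

Hypothesis rho_large : forall T, cinter t T -> d < #|rho A T|.
Hypothesis rho_overlap : forall T1 T2, cinter t T1 -> cinter t T2 -> T1 != T2 ->
  #|rho A T1 :&: rho A T2| <= 1.

Lemma disjunct_of_small_overlaps (F : {set {set pairT k v}}) :
  (forall T, T \in F -> cinter t T) -> #|F| = d ->
  forall T, cinter t T -> (rho A T \subset rhoF A F <-> T \in F).
Proof.
move=> cinF cardF T cinT; split=> [subTF|TF]; last exact: (bigcup_sup T TF).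
apply/negPn/negP => TnF.
have cover_rhoT : rho A T \subset \bigcup_(T' in F) (rho A T :&: rho A T').
  apply/subsetP => r rT; have /bigcupP[T' T'F rT'] := subsetP subTF r rT.
  by apply/bigcupP; exists T'; rewrite // inE rT rT'.
have small : \sum_(T' in F) #|rho A T :&: rho A T'| <= \sum_(T' in F) 1.
  apply: leq_sum => T' T'F; apply: rho_overlap => //; first exact: cinF.
  by apply: contraNneq TnF => ->.
have := leq_trans (subset_leq_card cover_rhoT) (card_bigcup_le _ _).
move/leq_trans/(_ small); rewrite sum1_card cardF.
by move/(leq_trans (rho_large cinT)); rewrite ltnn.
Qed.

End CountingCriterion.

Lemma cinter2_window k v (T : {set pairT k v}) : cinter 2 T ->
  exists (c c' : 'I_k) (a b : 'I_v), c' = c.+1 :> nat /\ T = [set (c, a); (c', b)].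
Proof.
case=> i [x [ik ->]].
have ci : i < k by lia.
have ci' : i.+1 < k by lia.
exists (Ordinal ci), (Ordinal ci'), (x (Ordinal ci)), (x (Ordinal ci')); split=> //.
apply/setP => -[c y]; rewrite !inE /= !xpair_eqE.
have [->|nci] := eqVneq c (Ordinal ci).
  by rewrite -[Ordinal ci == _]val_eqE /= ltn_eqF // leqnn addn2 ltnW ?orbF.
have [->|nci'] := eqVneq c (Ordinal ci'); first by rewrite /= addn2 ltnSn leqnSn.
move: nci nci'; rewrite -!val_eqE /= => nci nci'.
by apply/negbTE; lia.
Qed.

Lemma rho_window N k v (A : 'M['I_v]_(N, k)) c c' a b :
  rho A [set (c, a); (c', b)] = [set r | (A r c == a) && (A r c' == b)].
Proof.
apply/setP => r; rewrite !inE; apply/forall_inP/andP => [matchT|[/eqP Ac /eqP Ac']].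
  by split; apply: (matchT (_, _)); rewrite !inE eqxx ?orbT.
by move=> [c'' y]; rewrite !inE !xpair_eqE => /orP[]/andP[/eqP-> /eqP->]; apply/eqP.
Qed.

Section WindowFamily.
Variables (d k v : nat) (R : finType) (row : R -> 'I_k -> 'I_v).

Definition window_rows (c c' : 'I_k) (a b : 'I_v) : {set R} :=
  [set p | (row p c == a) && (row p c' == b)].

Hypothesis window_large : forall c c' : 'I_k, c' = c.+1 :> nat ->
  forall a b, d < #|window_rows c c' a b|.
Hypothesis windows_determine : forall c1 c1' c2 c2' : 'I_k,
  c1' = c1.+1 :> nat -> c2' = c2.+1 :> nat -> c1 != c2 -> forall p q : R,
  row p c1 = row q c1 -> row p c1' = row q c1' ->
  row p c2 = row q c2 -> row p c2' = row q c2' -> p = q.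

Variables (N : nat) (cardR : #|R| = N).

Definition rank_row (r : 'I_N) : R := enum_val (cast_ord (esym cardR) r).
Definition row_rank (p : R) : 'I_N := cast_ord cardR (enum_rank p).
Definition family_mx : 'M['I_v]_(N, k) := \matrix_(r, c) row (rank_row r) c.

Lemma row_rankK : cancel row_rank rank_row.
Proof. by move=> p; rewrite /rank_row /row_rank cast_ordK enum_rankK. Qed.

Lemma rank_rowK : cancel rank_row row_rank.
Proof. by move=> r; rewrite /rank_row /row_rank enum_valK cast_ordKV. Qed.

Lemma rho_family_window c c' a b :
  rho family_mx [set (c, a); (c', b)] = row_rank @: window_rows c c' a b.
Proof.
rewrite rho_window (can2_imset_pre _ row_rankK rank_rowK).
by apply/setP => r; rewrite !inE !mxE.
Qed.

Lemma family_rho_large T : cinter 2 T -> d < #|rho family_mx T|.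
Proof.
move=> /cinter2_window [c [c' [a [b [cc' ->]]]]].
by rewrite rho_family_window card_imset ?window_large //; apply: can_inj row_rankK.
Qed.

(* ... and (W2) the second: distinct windows at one position share no row,
   windows at different positions share at most one. *)
Lemma family_rho_overlap T1 T2 : cinter 2 T1 -> cinter 2 T2 -> T1 != T2 ->
  #|rho family_mx T1 :&: rho family_mx T2| <= 1.
Proof.
move=> /cinter2_window [c1 [c1' [a1 [b1 [cc1 ->]]]]].
move=> /cinter2_window [c2 [c2' [a2 [b2 [cc2 ->]]]]] T12.
rewrite !rho_family_window -imsetI; last by move=> p q _ _ /(can_inj row_rankK).
rewrite card_imset; last exact: can_inj row_rankK.
apply/card_le1_eqP => p q; rewrite !inE.
move=> /andP[/andP[/eqP p1 /eqP p1'] /andP[/eqP p2 /eqP p2']].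
move=> /andP[/andP[/eqP q1 /eqP q1'] /andP[/eqP q2 /eqP q2']].
have [ec|nc] := eqVneq c1 c2.
  have ec' : c1' = c2' by apply: val_inj => /=; rewrite cc1 cc2 ec.
  by case/eqP: T12; rewrite -p1 -p1' -p2 -p2' ec ec'.
by apply: (windows_determine cc1 cc2 nc); rewrite ?p1 ?q1 ?p1' ?q1' ?p2 ?q2 ?p2' ?q2'.
Qed.

Lemma family_covers i : i + 2 <= k -> forall x : 'I_2 -> 'I_v,
  exists r : 'I_N, forall (j : 'I_2) (c : 'I_k), c = i + j :> nat -> family_mx r c = x j.
Proof.
move=> ik x; have ci : i < k by lia.
have ci' : i.+1 < k by lia.
have /card_gt0P[p] := leq_ltn_trans (leq0n d)
  (window_large (c := Ordinal ci) (c' := Ordinal ci') erefl (x ord0) (x ord_max)).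
rewrite inE => /andP[/eqP p0 /eqP p1]; exists (row_rank p) => -[[|[|j]] j2] //= c.
  rewrite mxE row_rankK addn0 => ec; have -> : c = Ordinal ci by apply: val_inj.
  by rewrite p0; congr x; apply: val_inj.
rewrite mxE row_rankK addn1 => ec; have -> : c = Ordinal ci' by apply: val_inj.
by rewrite p1; congr x; apply: val_inj.
Qed.

Lemma family_is_CDA : is_CDA d 2 family_mx.
Proof.
split; first exact: family_covers.
exact: disjunct_of_small_overlaps family_rho_large family_rho_overlap.
Qed.

End WindowFamily.

Section ShiftRows.
Variables (V : zmodType) (S : Type) (sigma : S -> V).
Hypothesis sigma_inj : injective sigma.

Definition shift_row (p : S * (V * V)) (j : nat) : V :=
  let: (s, (a, b)) := p in
  match j with
  | 0 => a | 1 => b | 2 => a + sigma s | 3 => b + sigma s | _ => a + sigma s + sigma s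
  end%R.

Lemma shift_row_determined_lt (i i' : nat) p q : i < i' <= 3 ->
  shift_row p i = shift_row q i -> shift_row p i.+1 = shift_row q i.+1 ->
  shift_row p i' = shift_row q i' -> shift_row p i'.+1 = shift_row q i'.+1 ->
  p = q.
Proof.
case: p q => s [a b] [s' [a' b']].
have row_eq : [/\ a = a', b = b' & sigma s = sigma s'] -> (s, (a, b)) = (s', (a', b')).
  by case=> -> -> /sigma_inj ->.
move=> lt_ii' e e1 e' e1'; apply: row_eq; move: lt_ii' e e1 e' e1'.
case: i i' => [|[|[|[|i]]]] [|[|[|[|[|i']]]]] //=; rewrite ?andbF // => _.
- by move=> -> -> _ /addrI ->.
- by move=> -> -> /addrI -> _.
- by move=> -> -> /addrI -> _.
- by move=> -> + _ /addrI es; rewrite es => /addIr ->.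
- by move=> -> + /addrI es _; rewrite es => /addIr ->.
- move=> eas ebs _; rewrite eas => /addrI es.
  by move: eas ebs; rewrite es => /addIr -> /addIr ->.
Qed.

Lemma shift_row_determined (i i' : nat) p q : i != i' -> i <= 3 -> i' <= 3 ->
  shift_row p i = shift_row q i -> shift_row p i.+1 = shift_row q i.+1 ->
  shift_row p i' = shift_row q i' -> shift_row p i'.+1 = shift_row q i'.+1 ->
  p = q.
Proof.
move=> nii i3 i'3; case: (ltngtP i i') => [lt_ii'|lt_i'i|/eqP]; last by rewrite (negbTE nii).
  by apply: shift_row_determined_lt; rewrite lt_ii'.
by move=> ? ? ? ?; apply: (@shift_row_determined_lt i' i); rewrite ?lt_i'i.
Qed.

Definition window_solution (i : nat) (s : S) (x0 x1 : V) : S * (V * V) :=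
  match i with
  | 0 => (s, (x0, x1))
  | 1 => (s, ((x1 - sigma s)%R, x0))
  | 2 => (s, ((x0 - sigma s)%R, (x1 - sigma s)%R))
  | _ => (s, ((x1 - sigma s - sigma s)%R, (x0 - sigma s)%R))
  end.

Lemma window_solutionP i s x0 x1 : i <= 3 ->
  shift_row (window_solution i s x0 x1) i = x0 /\
  shift_row (window_solution i s x0 x1) i.+1 = x1.
Proof. by case: i => [|[|[|[|i]]]] //= _; rewrite ?subrK. Qed.

Lemma window_solution_shift i s x0 x1 : (window_solution i s x0 x1).1 = s.
Proof. by case: i => [|[|[|i]]]. Qed.

End ShiftRows.

Section CyclicConstruction.
Variables (n d : nat).
Hypothesis d_small : d + 1 <= n.+2.

Definition small_shift (s : 'I_(d + 1)) : 'I_n.+2 := ((s : nat)%:R)%R.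

Lemma small_shift_inj : injective small_shift.
Proof.
move=> s s'; rewrite /small_shift !Zp_nat => /(congr1 val) /=.
have lt_n2 (u : 'I_(d + 1)) : u < n.+2 by exact: leq_trans (ltn_ord u) d_small.
by rewrite !modn_small // => /val_inj.
Qed.

Definition cyclic_index : finType := ('I_(d + 1) * ('I_n.+2 * 'I_n.+2))%type.

Definition cyclic_row (p : cyclic_index) (c : 'I_5) : 'I_n.+2 :=
  shift_row small_shift p c.

(* (W1): each window pattern is met by the d + 1 rows window_solution _ s _ _. *)
Lemma cyclic_window_large (c c' : 'I_5) : c' = c.+1 :> nat ->
  forall a b, d < #|window_rows cyclic_row c c' a b|.
Proof.
move=> cc' a b; have c3 : c <= 3 by have := ltn_ord c'; lia.
pose sol s := window_solution small_shift c s a b.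
have sol_inj : injective sol.
  by move=> s s' /(congr1 fst); rewrite !window_solution_shift.
have : [set sol s | s : 'I_(d + 1)] \subset window_rows cyclic_row c c' a b.
  apply/subsetP => _ /imsetP[s _ ->]; rewrite inE /cyclic_row cc'.
  by have [-> ->] := window_solutionP small_shift s a b c3; rewrite !eqxx.
by move/subset_leq_card; rewrite card_imset // card_ord; apply: leq_trans; rewrite addn1.
Qed.

Lemma cyclic_windows_determine (c1 c1' c2 c2' : 'I_5) :
  c1' = c1.+1 :> nat -> c2' = c2.+1 :> nat -> c1 != c2 -> forall p q,
  cyclic_row p c1 = cyclic_row q c1 -> cyclic_row p c1' = cyclic_row q c1' ->
  cyclic_row p c2 = cyclic_row q c2 -> cyclic_row p c2' = cyclic_row q c2' -> p = q.
Proof.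
move=> cc1 cc2 nc p q; rewrite /cyclic_row cc1 cc2.
apply: (shift_row_determined small_shift_inj) => //.
  by have := ltn_ord c1'; lia.
by have := ltn_ord c2'; lia.
Qed.

End CyclicConstruction.

Theorem mainTheorem17 (v : nat) (hv4 : 4 <= v) (hv : v %% 4 != 2) :
  forall d : nat, 0 < d -> d + 1 <= v ->
  exists A : 'M['I_v]_((d + 1) * v ^ 2, 5), is_optimum_CDA d 2 A.
Proof.
case: v hv4 hv => [|[|n]] // _ _ d _ d_small.
have cardR : #|cyclic_index n d| = (d + 1) * n.+2 ^ 2.
  by rewrite !card_prod !card_ord mulnn.
exists (family_mx (@cyclic_row n d) cardR); split=> //.
apply: family_is_CDA.
- exact: cyclic_window_large.
- exact: cyclic_windows_determine.
Qed.
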